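(* Let $m,n\ge1$. The set of monomials \[\Big\{\prod_{i,j}\eta_{ij}^{a_{ij}}\xi_{ij}^{b_{ij}}\ \Big|\ \text{for every } i:\ \big(\exists j \text{ with } a_{ij}>0 \text{ or } b_{ij}>0\big)\Rightarrow\big(a_{ik}>0\text{ for all }k\big)\Big\}\] (with $a_{ij},b_{ij}\in\mathbb{N}$) is an $\mathbb{R}$-basis of $R^m_n$.
   Context: $\eta_{ij},\xi_{ij}$ ($1\le i\le m$, $1\le j\le n$) are independent variables. $R^m_n$ is the set of polynomials $f\in\mathbb{R}[\eta_{ij},\xi_{ij}]$ such that for every $i\in\{1,\dots,m\}$ and every $k\in\{1,\dots,n\}$, the polynomial obtained from $f$ by substituting $\eta_{ik}=0$ does not depend on any of the variables $\xi_{ij}$ ($1\le j\le n$) or $\eta_{ij}$ ($j\ne k$). $R^m_n$ is a subring (in particular an $\mathbb{R}$-subspace) of the polynomial ring. *)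

(* Polynomials in the 2mn variables eta_ij, xi_ij are
   represented as finitely supported coefficient functions on monomials. *)
From HB Require Import structures.
From mathcomp Require Import all_boot all_order all_algebra.
Set Implicit Arguments. Unset Strict Implicit. Unset Printing Implicit Defensive.
Import Order.TTheory GRing.Theory Num.Theory.
Local Open Scope ring_scope.

(* variables: inl (i,j) = eta_ij, inr (i,j) = xi_ij *)
Definition var (m n : nat) : Type := (('I_m * 'I_n) + ('I_m * 'I_n))%type.

(* a monomial prod eta_ij^(a ij) xi_ij^(b ij) is the pair (a, b) *)
Definition mono (m n : nat) : Type :=
  ({ffun 'I_m * 'I_n -> nat} * {ffun 'I_m * 'I_n -> nat})%type.

Definition expo m n (u : mono m n) (v : var m n) : nat :=
  match v with inl p => u.1 p | inr p => u.2 p end.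

Definition finsupp (R : realFieldType) m n (f : mono m n -> R) : Prop :=
  exists s : seq (mono m n), forall u, f u != 0 -> u \in s.

Definition subst_eta0 (R : realFieldType) m n (i : 'I_m) (k : 'I_n)
  (f : mono m n -> R) : mono m n -> R :=
  fun u => if u.1 (i, k) == 0%N then f u else 0.

Definition depends_on (R : realFieldType) m n (f : mono m n -> R) (v : var m n) : Prop :=
  exists u, f u != 0 /\ (0 < expo u v)%N.

Definition inRmn (R : realFieldType) m n (f : mono m n -> R) : Prop :=
  finsupp f /\
  forall (i : 'I_m) (k : 'I_n),
    (forall j : 'I_n, ~ depends_on (subst_eta0 i k f) (inr (i, j))) /\
    (forall j : 'I_n, j != k -> ~ depends_on (subst_eta0 i k f) (inl (i, j))).

Definition monomial (R : realFieldType) m n (u : mono m n) : mono m n -> R :=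
  fun x => (x == u)%:R.

Definition lincomb (R : realFieldType) m n (s : seq (mono m n)) (c : mono m n -> R)
  : mono m n -> R :=
  fun x => \sum_(u <- s) c u * monomial R u x.

Definition inB m n (u : mono m n) : Prop :=
  forall i : 'I_m,
    (exists j : 'I_n, (0 < u.1 (i, j))%N \/ (0 < u.2 (i, j))%N) ->
    forall k : 'I_n, (0 < u.1 (i, k))%N.

Definition is_basis_Rmn (R : realFieldType) m n (B : mono m n -> Prop) : Prop :=
  (forall u, B u -> inRmn (monomial R u)) /\
  (forall (s : seq (mono m n)) (c : mono m n -> R),
      uniq s -> (forall u, u \in s -> B u) ->
      (forall x, lincomb s c x = 0) -> forall u, u \in s -> c u = 0) /\
  (forall f : mono m n -> R, inRmn f ->
      exists (s : seq (mono m n)) (c : mono m n -> R),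
        uniq s /\ (forall u, u \in s -> B u) /\ forall x, f x = lincomb s c x).

From HB Require Import structures.
From mathcomp Require Import all_boot all_order all_algebra.
Set Implicit Arguments. Unset Strict Implicit. Unset Printing Implicit Defensive.
Import Order.TTheory GRing.Theory Num.Theory.
Local Open Scope ring_scope.

(* Substituting [eta_ik = 0] keeps exactly the monomials of [f] not divisible
   by [eta_ik]; asking that these involve no other variable of row [i] says
   that every monomial of [f] touching row [i] is divisible by all [eta_ik].
   Hence [R^m_n] consists precisely of the polynomials supported on the given
   set of monomials, and the theorem reduces to the fact that distinct
   monomials are linearly independent and span all polynomials. *)

Section MembershipRmn.

Variables (R : realFieldType) (m n : nat).
Implicit Types (f : mono m n -> R) (u : mono m n).

Lemma inRmnP f : inRmn f <-> finsupp f /\ (forall u, f u != 0 -> inB u).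
Proof.
split=> [[fin_f subst_f] | [fin_f supp_f]].
  split=> // u fu_neq0 i [j row_ij] k; rewrite lt0n; apply/negP => /eqP eta_ik0.
  have substu_neq0 : subst_eta0 i k f u != 0 by rewrite /subst_eta0 eta_ik0 eqxx.
  have [no_xi no_eta] := subst_f i k.
  case: row_ij => [eta_ij | xi_ij]; last by apply: (no_xi j); exists u.
  have [ejk | njk] := eqVneq j k; first by rewrite ejk eta_ik0 in eta_ij.
  by apply: (no_eta j njk); exists u.
have substP i k u : subst_eta0 i k f u != 0 -> u.1 (i, k) = 0%N /\ inB u.
  rewrite /subst_eta0; case: ifP => [/eqP eta_ik0 fu_neq0 | _]; last by rewrite eqxx.
  by split; last exact: supp_f.
split=> // i k; split=> [j | j _] [u [/substP [eta_ik0 Bu] expo_pos]].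
  by have := Bu i (ex_intro _ j (or_intror expo_pos)) k; rewrite eta_ik0.
by have := Bu i (ex_intro _ j (or_introl expo_pos)) k; rewrite eta_ik0.
Qed.

Lemma finsupp_monomial u : finsupp (monomial R u).
Proof. by exists [:: u] => x; rewrite /monomial mem_seq1; case: (x == u); rewrite ?eqxx. Qed.

Lemma monomial_neq0 u x : monomial R u x != 0 -> x = u.
Proof. by rewrite /monomial; case: (eqVneq x u) => // _; rewrite eqxx. Qed.

Lemma lincombE (s : seq (mono m n)) (c : mono m n -> R) x :
  uniq s -> lincomb s c x = if x \in s then c x else 0.
Proof.
rewrite /lincomb /monomial; elim: s => [|a s IHs] /=; first by rewrite big_nil.
case/andP=> a_notin_s uniq_s; rewrite big_cons IHs // in_cons.
have [-> | nxa] /= := eqVneq x a; first by rewrite (negbTE a_notin_s) mulr1 addr0.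
by rewrite mulr0 add0r.
Qed.

Lemma lincomb_support f :
  finsupp f -> exists2 s : seq (mono m n), uniq s &
    (forall u, u \in s = (f u != 0)) /\ forall x, f x = lincomb s f x.
Proof.
case=> s supp_s; exists (undup [seq u <- s | f u != 0]); first exact: undup_uniq.
have mem_supp u : u \in undup [seq u <- s | f u != 0] = (f u != 0).
  by rewrite mem_undup mem_filter andb_idr //; apply: supp_s.
split=> // x; rewrite lincombE ?undup_uniq // mem_supp.
by have [-> | //] := eqVneq (f x) 0.
Qed.

End MembershipRmn.

Theorem proposition2p6 (R : realFieldType) (m n : nat) (hm : (0 < m)%N) (hn : (0 < n)%N) :
  is_basis_Rmn R (@inB m n).
Proof.
split; [|split].
- move=> u Bu; apply/inRmnP; split; first exact: finsupp_monomial.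
  by move=> x /monomial_neq0 ->.
- move=> s c uniq_s _ lincomb0 u u_in_s.
  by have := lincomb0 u; rewrite lincombE // u_in_s.
- move=> f /inRmnP [fin_f supp_f]; have [s uniq_s [mem_s f_eq]] := lincomb_support fin_f.
  exists s, f; split=> //; split=> // u; rewrite mem_s; exact: supp_f.
Qed.
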